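(* Let $R$ be a locally stable commutative ring. Then every stably free $R$-module is free; equivalently, for all $n$ and $a_1,\dots,a_n\in R$ with $a_1R+\cdots+a_nR=R$, the row $(a_1,\dots,a_n)$ is the first row of an invertible $n\times n$ matrix over $R$.
   Context: All rings are commutative with identity. An $R$-module $P$ is stably free if $P\oplus R^m\cong R^n$ for some $m,n\in\mathbb{N}$. A ring $S$ has stable range 1 if whenever $aS+bS=S$ there is $y\in S$ with $a+by$ a unit. $R$ is locally stable if whenever $a,b\in R$ with $aR+bR=R$ there is $y\in R$ such that $R/(a+by)R$ has stable range 1. *)

From HB Require Import structures.
From mathcomp Require Import all_boot all_order all_algebra.
Set Implicit Arguments. Unset Strict Implicit. Unset Printing Implicit Defensive.
Import GRing.Theory.
Local Open Scope ring_scope.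

(* Commutative rings with identity: R : comNzRingType (no decidable-unit
   structure is assumed, so units and invertible matrices are defined
   existentially). *)

Definition is_unit (R : comNzRingType) (x : R) : Prop := exists u : R, x * u = 1.

(* The quotient S = R/cR has stable range 1, written out in terms of R:
   a,b in S with aS + bS = S (i.e. a x + b y = 1 modulo cR) admit y with
   a + b y a unit of S (i.e. (a + b y) u = 1 modulo cR). *)
Definition quot_stable_range1 (R : comNzRingType) (c : R) : Prop :=
  forall a b : R,
    (exists x y z : R, a * x + b * y + c * z = 1) ->
    exists y : R, exists u z : R, (a + b * y) * u + c * z = 1.

Definition stable_range1 (R : comNzRingType) : Prop :=
  forall a b : R, (exists x y : R, a * x + b * y = 1) ->
    exists y : R, is_unit (a + b * y).

Definition locally_stable (R : comNzRingType) : Prop :=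
  forall a b : R, (exists x y : R, a * x + b * y = 1) ->
    exists y : R, quot_stable_range1 (a + b * y).

Definition lmod_iso (R : comNzRingType) (U V : lmodType R) : Prop :=
  exists f : U -> V, linear f /\ bijective f.

Definition stably_free (R : comNzRingType) (P : lmodType R) : Prop :=
  exists m n : nat, lmod_iso (P * 'rV[R]_m)%type 'rV[R]_n.

Definition free_module (R : comNzRingType) (P : lmodType R) : Prop :=
  exists k : nat, lmod_iso P 'rV[R]_k.

Definition unimodular (R : comNzRingType) (n : nat) (a : 'rV[R]_n) : Prop :=
  exists x : 'rV[R]_n, \sum_(i < n) a 0 i * x 0 i = 1.

Definition invertible_mx (R : comNzRingType) (n : nat) (A : 'M[R]_n) : Prop :=
  exists B : 'M[R]_n, A *m B = 1%:M /\ B *m A = 1%:M.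

(* Over a locally stable ring, elementary column operations bring a unimodular
   row (a0, a1, r) with a0 x0 + a1 x1 + r.w = 1 to the shape (c, d, 0): local
   stability makes R/cR of stable range 1 for some c = a0 + (a1 x1 + r.w) y,
   which turns a1 into a unit d modulo c; then c and d generate R, so they clear
   the remaining entries, and (c, d, 0) is the first row of an invertible block
   matrix.  For modules, P (+) R ~= R^n sends the generator of R to a unimodular
   row v; completing v to an invertible matrix gives an automorphism of R^n
   moving the first coordinate line onto that summand, and cancelling it leaves
   P ~= R^(n-1).  Induction on the rank of the free complement concludes. *)

From HB Require Import structures.
From mathcomp Require Import all_boot all_order all_algebra.
From mathcomp Require Import ring.
Set Implicit Arguments. Unset Strict Implicit. Unset Printing Implicit Defensive.
Local Open Scope ring_scope.
Import GRing.Theory.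

Section RowOperations.
Variable R : comNzRingType.

Definition dotr n (a b : 'rV[R]_n) : R := (a *m b^T) 0 0.

Lemma dotrE n (a b : 'rV[R]_n) : dotr a b = \sum_i a 0 i * b 0 i.
Proof. by rewrite /dotr mxE; apply: eq_bigr => i _; rewrite mxE. Qed.

Lemma dotrC n (a b : 'rV[R]_n) : dotr a b = dotr b a.
Proof. by rewrite !dotrE; apply: eq_bigr => i _; rewrite mulrC. Qed.

Lemma dotrZr n k (a b : 'rV[R]_n) : dotr a (k *: b) = k * dotr a b.
Proof. by rewrite /dotr linearZ /= -scalemxAr mxE. Qed.

Lemma dotr0 n (a : 'rV[R]_n) : dotr a 0 = 0.
Proof. by rewrite /dotr linear0 mulmx0 mxE. Qed.

Definition row_equiv n (a b : 'rV[R]_n) := exists M, invertible_mx M /\ a *m M = b.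

Definition completable n (a : 'rV[R]_n.+1) :=
  exists A, invertible_mx A /\ row 0 A = a.

Lemma invertible_mxM n (A B : 'M[R]_n) :
  invertible_mx A -> invertible_mx B -> invertible_mx (A *m B).
Proof.
move=> [A' [AA' A'A]] [B' [BB' B'B]]; exists (B' *m A'); split.
  by rewrite mulmxA -(mulmxA A) BB' mulmx1 AA'.
by rewrite mulmxA -(mulmxA B') A'A mulmx1 B'B.
Qed.

Lemma row_equiv_trans n (a b c : 'rV[R]_n) :
  row_equiv a b -> row_equiv b c -> row_equiv a c.
Proof.
move=> [M [iM <-]] [N [iN <-]]; exists (M *m N).
by split; [exact: invertible_mxM | rewrite mulmxA].
Qed.

(* The transvection [1 + p^T q] is invertible because [(p^T q)^2 = (q . p) p^T q = 0]. *)
Lemma row_equiv_add n (a p q : 'rV[R]_n) :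
  dotr q p = 0 -> row_equiv a (a + dotr a p *: q).
Proof.
move=> qp0; have N2 : p^T *m q *m (p^T *m q) = 0.
  rewrite mulmxA -(mulmxA _ q) [q *m _]mx11_scalar -/(dotr q p) qp0.
  by rewrite mul_mx_scalar scale0r mul0mx.
exists (1%:M + p^T *m q); split.
  exists (1%:M - p^T *m q); split.
    by rewrite mulmxDl mul1mx mulmxBr mulmx1 N2 subr0 subrK.
  by rewrite mulmxBl mul1mx mulmxDr mulmx1 N2 addr0 addrK.
by rewrite mulmxDr mulmx1 mulmxA [a *m _]mx11_scalar mul_scalar_mx.
Qed.

Lemma completable_row_equiv n (a b : 'rV[R]_n.+1) :
  row_equiv a b -> completable b -> completable a.
Proof.
move=> [M [[M' [MM' M'M]] aM]] [A [iA rA]]; exists (A *m M'); split.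
  by apply: invertible_mxM => //; exists M.
by rewrite row_mul rA -aM -mulmxA MM' mulmx1.
Qed.

Definition row_cons2 n (c d : R) (r : 'rV[R]_n) : 'rV[R]_(1 + 1 + n) :=
  row_mx (row_mx c%:M d%:M) r.

Lemma row_cons2P n (a : 'rV[R]_(1 + 1 + n)) : exists c d r, a = row_cons2 c d r.
Proof.
exists (lsubmx (lsubmx a) 0 0), (rsubmx (lsubmx a) 0 0), (rsubmx a).
by rewrite /row_cons2 -!mx11_scalar !hsubmxK.
Qed.

Lemma add_row_cons2 n c d (r : 'rV[R]_n) c' d' r' :
  row_cons2 c d r + row_cons2 c' d' r' = row_cons2 (c + c') (d + d') (r + r').
Proof. by rewrite /row_cons2 !add_row_mx !raddfD. Qed.

Lemma scale_row_cons2 n k c d (r : 'rV[R]_n) :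
  k *: row_cons2 c d r = row_cons2 (k * c) (k * d) (k *: r).
Proof. by rewrite /row_cons2 !scale_row_mx !scale_scalar_mx. Qed.

Lemma dotr_cons2 n c d (r : 'rV[R]_n) c' d' r' :
  dotr (row_cons2 c d r) (row_cons2 c' d' r') = c * c' + d * d' + dotr r r'.
Proof.
rewrite /dotr /row_cons2 !tr_row_mx !mul_row_col !tr_scalar_mx -!scalar_mxM.
by rewrite !mxE !eqxx !mulr1n.
Qed.

Lemma row_equiv_cons2_addc n c d (r : 'rV[R]_n) y w :
  row_equiv (row_cons2 c d r) (row_cons2 (c + (d * y + dotr r w)) d r).
Proof.
have := @row_equiv_add _ (row_cons2 c d r) (row_cons2 0 y w) (row_cons2 1 0 0).
rewrite !dotr_cons2 mul0r mulr0 !add0r dotrC dotr0 => /(_ erefl).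
by rewrite scale_row_cons2 add_row_cons2 !(mulr1, mulr0, scaler0, addr0, add0r).
Qed.

Lemma row_equiv_cons2_addd n c d (r : 'rV[R]_n) y w :
  row_equiv (row_cons2 c d r) (row_cons2 c (d + (c * y + dotr r w)) r).
Proof.
have := @row_equiv_add _ (row_cons2 c d r) (row_cons2 y 0 w) (row_cons2 0 1 0).
rewrite !dotr_cons2 mul0r mulr0 !add0r dotrC dotr0 => /(_ erefl).
by rewrite scale_row_cons2 add_row_cons2 !(mulr1, mulr0, scaler0, addr0, add0r).
Qed.

Lemma row_equiv_cons2_clear n c d (r : 'rV[R]_n) z u :
  c * z + d * u = 1 -> row_equiv (row_cons2 c d r) (row_cons2 c d 0).
Proof.
move=> cdzu.
have := @row_equiv_add _ (row_cons2 c d r) (row_cons2 z u 0) (row_cons2 0 0 (- r)).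
rewrite !dotr_cons2 !mul0r !dotr0 !addr0 cdzu => /(_ erefl).
by rewrite scale1r add_row_cons2 !addr0 subrr.
Qed.

Lemma invertible_block_mx1 m n (A : 'M[R]_m) :
  invertible_mx A -> invertible_mx (block_mx A 0 0 1%:M : 'M_(m + n)).
Proof.
move=> [B [AB BA]]; exists (block_mx B 0 0 1%:M).
by rewrite !mulmx_block AB BA !(mulmx0, mul0mx, mulmx1, addr0, add0r) -scalar_mx_block.
Qed.

(* The matrix [[c, d], [-u, z]] has determinant [c z + d u]; its inverse is
   the adjugate [[z, -d], [u, c]]. *)
Lemma invertible_mx22 c d z u :
  c * z + d * u = 1 ->
  invertible_mx (block_mx c%:M d%:M (- u)%:M z%:M : 'M[R]_(1 + 1)).
Proof.
move=> cdzu; exists (block_mx z%:M (- d)%:M u%:M c%:M).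
rewrite !mulmx_block -!scalar_mxM -!raddfD /= [1%:M]scalar_mx_block.
by split; congr block_mx; apply/matrixP => i j;
  rewrite !ord1 !mxE eqxx ?mulr1n -?cdzu; ring.
Qed.

Lemma completable_cons2 n c d z u :
  c * z + d * u = 1 -> completable (row_cons2 c d (0 : 'rV[R]_n)).
Proof.
move=> cdzu; exists (block_mx (block_mx c%:M d%:M (- u)%:M z%:M) 0 0 1%:M
  : 'M_(1 + 1 + n)).
split; first exact: invertible_block_mx1 (invertible_mx22 cdzu).
have -> : 0 = lshift n (lshift 1 (0 : 'I_1)) by apply: val_inj.
(* [row] must be taken at the block dimension [1 + 1 + n], not at [n.+2]. *)
change (@row R (1 + 1 + n) (1 + 1 + n) (lshift n (lshift 1 0))
  (block_mx (block_mx c%:M d%:M (- u)%:M z%:M) 0 0 1%:M) = row_cons2 c d 0).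
by rewrite /block_mx rowKu row_row_mx rowKu row_row_mx !row_id row0.
Qed.

Lemma completable1 (a x : 'rV[R]_1) : dotr a x = 1 -> completable a.
Proof.
rewrite [a]mx11_scalar [x]mx11_scalar /dotr tr_scalar_mx -scalar_mxM.
rewrite mxE eqxx mulr1n => ax.
exists (a 0 0)%:M; rewrite row_id; split => //; exists (x 0 0)%:M.
by split; rewrite mul_scalar_mx scale_scalar_mx ?ax // mulrC ax.
Qed.

End RowOperations.

Section ModuleIsomorphisms.
Variable R : comNzRingType.
Implicit Types U V W : lmodType R.

Lemma lmod_isoP U V : lmod_iso U V <-> exists f : {linear U -> V}, bijective f.
Proof.
split=> [[f [lf bf]] | [f bf]]; last by exists f; split => //; exact: linearPZ.
by exists (HB.pack_for {linear U -> V} f (GRing.isLinear.Build R U V *:%R f lf)).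
Qed.

Lemma lmod_iso_sym U V : lmod_iso U V -> lmod_iso V U.
Proof.
move=> /lmod_isoP[f [g fK gK]]; exists g.
by split; [exact: can2_linear fK gK | exists f].
Qed.

Lemma lmod_iso_trans U V W : lmod_iso U V -> lmod_iso V W -> lmod_iso U W.
Proof.
move=> /lmod_isoP[f bf] /lmod_isoP[g bg]; apply/lmod_isoP.
by exists (g \o f : {linear U -> W}); exact: bij_comp.
Qed.

Lemma pairB (X Y : zmodType) (x x' : X) (y y' : Y) :
  (x, y) - (x', y') = (x - x', y - y').
Proof. by []. Qed.

Lemma lmod_iso_cancel U V W (phi : {linear (U * W)%type -> (V * W)%type}) :
  bijective phi -> (forall w, phi (0, w) = (0, w)) -> lmod_iso U V.
Proof.
move=> [psi phiK psiK] phi0.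
pose F u := (phi (u, 0)).1; pose G v := (psi (v, 0)).1.
exists F; split.
  move=> k u u'; rewrite /F (_ : (k *: u + u', 0) = k *: (u, 0) + (u', 0)).
    by rewrite linearP.
  by congr (_, _); rewrite -[RHS]/(k *: 0 + 0) scaler0 addr0.
exists G.
  move=> u; rewrite /G /F; case E: (phi (u, 0)) => [v b] /=.
  have : phi (u, - b) = (v, 0).
    by rewrite -(subr0 u) -(sub0r b) -pairB linearB E phi0 pairB subr0 subrr.
  by move/(congr1 psi); rewrite phiK => <-.
move=> v; rewrite /G /F; case E: (psi (v, 0)) => [u b] /=.
have -> : (u, 0) = (u, b) - (0, b) by rewrite pairB subr0 subrr.
by rewrite linearB -E psiK phi0 pairB subr0.
Qed.

Lemma pairZ (X Y : lmodType R) k (x : X) (y : Y) : k *: (x, y) = (k *: x, k *: y).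
Proof. by []. Qed.

Lemma lmod_iso_rV0 U : lmod_iso U (U * 'rV[R]_0)%type.
Proof.
exists (fun u => (u, 0)); split.
  by move=> c u u'; congr pair; rewrite -[RHS]/(c *: 0 + 0) scaler0 addr0.
by exists fst => // -[u w]; rewrite [w]thinmx0.
Qed.

Lemma lmod_iso_addrS U m :
  lmod_iso ((U * 'rV[R]_m) * 'rV[R]_1)%type (U * 'rV[R]_m.+1)%type.
Proof.
exists (fun x => (x.1.1, row_mx x.2 x.1.2 : 'rV_(1 + m))); split.
  move=> c [[u w] s] [[u' w'] s']; congr pair.
  by rewrite -[RHS]/(c *: row_mx s w + row_mx s' w') scale_row_mx add_row_mx.
exists (fun y : U * 'rV_(1 + m) => ((y.1, rsubmx y.2), lsubmx y.2)).
  by move=> [[u w] s]; rewrite /= row_mxKl row_mxKr.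
by move=> [u w]; rewrite /= hsubmxK.
Qed.

Lemma unimodular_functional n (f : {linear 'rV[R]_n -> 'rV[R]_1}) (v : 'rV[R]_n) :
  f v = 1%:M -> unimodular v.
Proof.
move=> fv; exists (\row_i f (delta_mx 0 i) 0 0).
move/matrixP/(_ 0 0): fv; rewrite {1}(row_sum_delta v) linear_sum summxE.
rewrite mxE eqxx /= => H; apply: etrans H; apply: eq_bigr => i _.
by rewrite linearZ !mxE.
Qed.

End ModuleIsomorphisms.

Section LocallyStable.
Variable R : comNzRingType.
Hypothesis hR : locally_stable R.

Lemma row_equiv_cons2_unimodular n a0 a1 (r : 'rV[R]_n) x0 x1 w :
  a0 * x0 + a1 * x1 + dotr r w = 1 ->
  exists c d z u, c * z + d * u = 1 /\
    row_equiv (row_cons2 a0 a1 r) (row_cons2 c d 0).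
Proof.
set s := dotr r w => ax.
have [y sr1] : exists y, quot_stable_range1 (a0 + (a1 * x1 + s) * y).
  by apply: hR; exists x0, 1; rewrite mulr1 addrA.
set c := a0 + _ in sr1.
(* Modulo c, a0 = - (a1 x1 + s) y, so a0 x0 + a1 x1 + s = 1 makes (a1, s)
   unimodular there. *)
have [t [u [z du]]] : exists t u z, (a1 + s * t) * u + c * z = 1.
  apply: sr1; exists (x1 * (1 - y * x0)), (1 - y * x0), x0.
  by rewrite -[RHS]ax /c; ring.
set d := a1 + s * t in du.
have cdzu : c * z + d * u = 1 by rewrite -du; ring.
exists c, d, z, u; split => //.
apply: row_equiv_trans (row_equiv_cons2_addc _ _ _ (x1 * y) (y *: w)) _.
rewrite dotrZr -/s (_ : a0 + _ = c); last by rewrite /c; ring.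
apply: row_equiv_trans (row_equiv_cons2_addd _ _ _ 0 (t *: w)) _.
rewrite dotrZr -/s mulr0 add0r (mulrC t).
exact: row_equiv_cons2_clear cdzu.
Qed.

Lemma unimodular_completable n (a : 'rV[R]_n.+1) : unimodular a -> completable a.
Proof.
move=> [x]; rewrite -dotrE; case: n a x => [|n] a x ax.
  exact: completable1 ax.
have [a0 [a1 [r ea]]] := row_cons2P a; have [x0 [x1 [w ex]]] := row_cons2P x.
rewrite ea ex dotr_cons2 in ax *.
have [c [d [z [u [cdzu aE]]]]] := row_equiv_cons2_unimodular ax.
exact: completable_row_equiv aE (completable_cons2 _ cdzu).
Qed.

Lemma free_module_cancel1 (U : lmodType R) n :
  lmod_iso (U * 'rV[R]_1)%type 'rV[R]_n -> free_module U.
Proof.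
move=> /lmod_iso_sym/lmod_isoP[h [g hK gK]].
case: n h g hK gK => [|k] h g hK gK.
  have := gK (0, 1%:M); rewrite (thinmx0 (g _)) linear0 => -[] /matrixP/(_ 0 0).
  by rewrite !mxE eqxx /= => /eqP; rewrite eq_sym oner_eq0.
set v := g (0, 1%:M).
have hv : h v = (0, 1%:M) by rewrite gK.
have [A [[B [AB BA]] rowA]] : completable v.
  apply: unimodular_completable (unimodular_functional (f := snd \o h) _).
  by rewrite /= hv.
pose phi (p : 'rV[R]_k * 'rV[R]_1) := h (row_mx p.2 p.1 *m A).
have lphi : linear phi.
  move=> c [p1 p2] [q1 q2]; rewrite /phi -[(_ + _).1]/(c *: p1 + q1).
  rewrite -[(_ + _).2]/(c *: p2 + q2) -add_row_mx -scale_row_mx.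
  by rewrite mulmxDl -scalemxAl linearP.
pose Phi := HB.pack_for {linear _ -> _} phi (GRing.isLinear.Build _ _ _ _ phi lphi).
exists k; apply: lmod_iso_sym; apply: (lmod_iso_cancel (phi := Phi)).
  pose chi q := let r := (g q *m B : 'rV_(1 + k)) in (rsubmx r, lsubmx r).
  exists chi => [p | q]; rewrite /= /phi /chi.
    by rewrite hK -mulmxA AB mulmx1 row_mxKl row_mxKr; case: p.
  by rewrite hsubmxK -mulmxA BA mulmx1 gK.
move=> s; rewrite /= /phi.
rewrite -[A](@vsubmxK _ 1 k) mul_row_col mul0mx addr0 [s]mx11_scalar mul_scalar_mx.
have -> : @usubmx _ 1 k _ A = v.
  rewrite -rowA -[@usubmx _ 1 k _ A](row_id 0) row_usubmx.
  by congr row; apply: val_inj.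
by rewrite linearZ /= hv pairZ scaler0 scalemx1.
Qed.

Lemma free_module_cancel (P : lmodType R) m n :
  lmod_iso (P * 'rV[R]_m)%type 'rV[R]_n -> free_module P.
Proof.
elim: m n => [|m IH] n iso.
  by exists n; exact: lmod_iso_trans (lmod_iso_rV0 P) iso.
have [k] := free_module_cancel1 (lmod_iso_trans (lmod_iso_addrS P m) iso).
exact: IH.
Qed.

End LocallyStable.

Theorem proposition4p5 (R : comNzRingType) (hR : locally_stable R) :
  (forall P : lmodType R, stably_free P -> free_module P) /\
  (forall (n : nat) (a : 'rV[R]_n.+1), unimodular a ->
     exists A : 'M[R]_n.+1, invertible_mx A /\ row 0 A = a).
Proof.
split=> [P [m [n iso]] | n a ua].
  exact: (free_module_cancel hR iso).
exact: (unimodular_completable hR ua).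
Qed.
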